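(* For $n\ge1$ let $\psi_n(x)=\sum_{i\in\mathbb Z}\phi_n(x-i)^2$, $x\in\mathbb R$, where $\phi_n$ is the basic limit function of $S_n$. Then $\psi_n$ is positive, symmetric ($\psi_n(-x)=\psi_n(x)$), and periodic with period $1$. Moreover $\int_0^1\psi_n(x)\,dx$ is of order $1/n$, i.e. $\int_0^1\psi_n(x)\,dx\sim 1/n$, and there is a real constant $C$, independent of $n$, such that $\|\psi_n\|_\infty\le C/n$ for all $n\ge1$.
   Context: For an integer $n\ge1$, the subdivision scheme $S_n$ acts on real sequences $\mathbf f^k=(f^k_i)_{i\in\mathbb Z}$ (the value $f^k_i$ being associated with the dyadic point $2^{-k}i$) by the refinement rules $$f^{k+1}_{2i}=\frac1{2n-1}\sum_{j=-n+1}^{n-1}f^k_{i+j},\qquad f^{k+1}_{2i+1}=\frac1{2n}\sum_{j=-n+1}^{n}f^k_{i+j}.$$ This scheme is convergent (for bounded initial data the values $f^k_i$ converge uniformly to $F(2^{-k}i)$ for a continuous $F$). The basic limit function $\phi_n$ is the limit function generated from $\delta$ ($\delta_0=1$, $\delta_i=0$ otherwise); it is continuous and supported in $[-2n+1,2n-1]$, so the sum defining $\psi_n$ is finite. *)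

From Stdlib Require Import Reals ZArith Lia Lra.
From Coquelicot Require Import Coquelicot.
Open Scope R_scope.

Fixpoint sum_up (m : nat) (g : nat -> R) : R :=
  match m with
  | O => 0
  | S m' => sum_up m' g + g m'
  end.

Definition sumZ (a b : Z) (g : Z -> R) : R :=
  sum_up (Z.to_nat (b - a + 1)) (fun k => g (a + Z.of_nat k)%Z).

(* One step of the scheme S_n: index j of the new sequence, with
   j = 2i (even) or j = 2i+1 (odd); in both cases i = floor(j/2). *)
Definition refine_step (n : nat) (f : Z -> R) : Z -> R :=
  fun j =>
    let i := (j / 2)%Z in
    let nz := Z.of_nat n in
    if Z.even j
    then / (2 * INR n - 1) * sumZ (- nz + 1) (nz - 1) (fun l => f (i + l)%Z)
    else / (2 * INR n) * sumZ (- nz + 1) nz (fun l => f (i + l)%Z).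

Definition delta (i : Z) : R := if Z.eqb i 0 then 1 else 0.

Fixpoint subdiv (n k : nat) : Z -> R :=
  match k with
  | O => delta
  | S k' => refine_step n (subdiv n k')
  end.

Definition is_basic_limit (n : nat) (F : R -> R) : Prop :=
  (forall x, continuous F x) /\
  forall eps, 0 < eps -> exists K : nat, forall k, (K <= k)%nat ->
    forall i : Z, Rabs (subdiv n k i - F (IZR i / 2 ^ k)) < eps.

(* psi(x) = sum_{i in Z} F(x - i)^2, written as a series over nat:
   index k contributes i = k and i = -(k+1). *)
Definition psi (F : R -> R) (x : R) : R :=
  Series (fun k : nat => (F (x - INR k))^2 + (F (x + INR k + 1))^2).

(* The mask of S_n is a nonnegative partition of unity.  Each refinement step averages
   2n-1 or 2n old values, so after one step all values lie in [0, 1/(2n-1)], the support of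
   subdiv n k stays within 2n 2^k, and its translates by multiples of 2^k still sum to 1.
   These properties pass to the limit: 0 <= phi_n <= 1/(2n-1), phi_n vanishes outside
   (-2n, 2n), phi_n is even, and sum_j phi_n(x - j) = 1.  For each x at most 4n of the
   phi_n(x - j) are nonzero, so Cauchy-Schwarz gives psi_n(x) >= 1/(4n), while
   psi_n(x) <= max phi_n * sum_j phi_n(x - j) <= 1/(2n-1) <= 1/n. *)

From Stdlib Require Import Reals ZArith Lia Lra.
From Coquelicot Require Import Coquelicot.
Open Scope R_scope.

Lemma sum_up_ext m f g : (forall k, (k < m)%nat -> f k = g k) -> sum_up m f = sum_up m g.
Proof.
  induction m as [|m IH]; intros H; simpl; auto.
  rewrite IH by (intros; apply H; lia). rewrite H by lia. reflexivity.
Qed.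

Lemma sum_up_S_l m g : sum_up (S m) g = g 0%nat + sum_up m (fun k => g (S k)).
Proof. induction m as [|m IH]; simpl in *; [ring | rewrite IH; ring]. Qed.

Lemma sum_up_plus m f g : sum_up m (fun k => f k + g k) = sum_up m f + sum_up m g.
Proof. induction m as [|m IH]; simpl; [ring | rewrite IH; ring]. Qed.

Lemma sum_up_scal m c f : sum_up m (fun k => c * f k) = c * sum_up m f.
Proof. induction m as [|m IH]; simpl; [ring | rewrite IH; ring]. Qed.

Lemma sum_up_const m c : sum_up m (fun _ => c) = INR m * c.
Proof. induction m as [|m IH]; cbn [sum_up]; [simpl; ring | rewrite IH, S_INR; ring]. Qed.

Lemma sum_up_swap m p (F : nat -> nat -> R) :
  sum_up m (fun a => sum_up p (F a)) = sum_up p (fun b => sum_up m (fun a => F a b)).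
Proof.
  induction m as [|m IH]; simpl.
  - rewrite sum_up_const; ring.
  - rewrite IH, <- sum_up_plus. reflexivity.
Qed.

Lemma sum_up_rev m F : sum_up m (fun k => F (m - 1 - k)%nat) = sum_up m F.
Proof.
  induction m as [|m IH] in F |- *; auto.
  rewrite (sum_up_S_l m F). cbn [sum_up]. rewrite Rplus_comm. f_equal.
  - f_equal; lia.
  - rewrite <- (IH (fun k => F (S k))). apply sum_up_ext; intros; f_equal; lia.
Qed.

Lemma sum_up_le m f g : (forall k, (k < m)%nat -> f k <= g k) -> sum_up m f <= sum_up m g.
Proof. induction m as [|m IH]; simpl; intros H; [lra | apply Rplus_le_compat; auto]. Qed.

Lemma sum_up_sqr_le m g : (sum_up m g) ^ 2 <= INR m * sum_up m (fun k => g k ^ 2).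
Proof.
  induction m as [|m IH]; cbn [sum_up]; [simpl; lra|]. rewrite S_INR.
  set (s := sum_up m g) in *. set (q := sum_up m (fun k => g k ^ 2)) in *.
  assert (Hm : 0 <= INR m) by apply pos_INR.
  assert (Hq : 0 <= q).
  { unfold q. rewrite <- (Rmult_0_r (INR m)), <- sum_up_const.
    apply sum_up_le; intros; apply pow2_ge_0. }
  (* [m (2 s g_m) <= m (m g_m^2 + q)] since [s^2 <= m q]; then divide by [m] *)
  assert (Hcross : INR m * (2 * s * g m) <= INR m * (INR m * g m ^ 2 + q)).
  { pose proof (pow2_ge_0 (INR m * g m - s)). nra. }
  destruct (Rle_lt_or_eq_dec 0 (INR m) Hm) as [Hpos|Hzero].
  - apply Rmult_le_reg_l in Hcross; [nra | exact Hpos].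
  - rewrite <- Hzero in *. assert (s = 0) as -> by nra. nra.
Qed.

Lemma sumZ_ext a b f g : (forall j, (a <= j <= b)%Z -> f j = g j) -> sumZ a b f = sumZ a b g.
Proof. intros H. apply sum_up_ext. intros. apply H. lia. Qed.

Lemma sumZ_eq0 a b g : (forall j, (a <= j <= b)%Z -> g j = 0) -> sumZ a b g = 0.
Proof.
  intros H. rewrite (sumZ_ext _ _ _ (fun _ => 0)) by exact H.
  unfold sumZ. rewrite sum_up_const. ring.
Qed.

Lemma sumZ_const a b c : (a <= b + 1)%Z -> sumZ a b (fun _ => c) = IZR (b - a + 1) * c.
Proof. intros H. unfold sumZ. rewrite sum_up_const, INR_IZR_INZ, Z2Nat.id by lia. reflexivity. Qed.

Lemma sumZ_single a g : sumZ a a g = g a.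
Proof. unfold sumZ. rewrite Z.sub_diag. simpl. rewrite Z.add_0_r. ring. Qed.

Lemma sumZ_S_r a b g : (a <= b + 1)%Z -> sumZ a (b + 1) g = sumZ a b g + g (b + 1)%Z.
Proof.
  intros H. unfold sumZ.
  replace (Z.to_nat (b + 1 - a + 1)) with (S (Z.to_nat (b - a + 1))) by lia.
  cbn [sum_up]. do 2 f_equal. lia.
Qed.

Lemma sumZ_S_l a b g : (a <= b + 1)%Z -> sumZ (a - 1) b g = g (a - 1)%Z + sumZ a b g.
Proof.
  intros H. unfold sumZ.
  replace (Z.to_nat (b - (a - 1) + 1)) with (S (Z.to_nat (b - a + 1))) by lia.
  rewrite sum_up_S_l. f_equal; [f_equal; lia | apply sum_up_ext; intros; f_equal; lia].
Qed.

Lemma sumZ_shift a b c g : sumZ a b (fun j => g (j + c)%Z) = sumZ (a + c) (b + c) g.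
Proof.
  unfold sumZ. replace (b + c - (a + c) + 1)%Z with (b - a + 1)%Z by lia.
  apply sum_up_ext. intros. f_equal. lia.
Qed.

Lemma sumZ_opp a b g : sumZ a b (fun j => g (- j)%Z) = sumZ (- b) (- a) g.
Proof.
  unfold sumZ. replace (- a - - b + 1)%Z with (b - a + 1)%Z by lia.
  rewrite <- sum_up_rev. apply sum_up_ext. intros. f_equal. lia.
Qed.

Lemma sumZ_scal a b c g : sumZ a b (fun j => c * g j) = c * sumZ a b g.
Proof. apply sum_up_scal. Qed.

Lemma sumZ_swap a b c d (F : Z -> Z -> R) :
  sumZ a b (fun j => sumZ c d (F j)) = sumZ c d (fun l => sumZ a b (fun j => F j l)).
Proof. apply sum_up_swap. Qed.

Lemma sumZ_le a b f g : (forall j, (a <= j <= b)%Z -> f j <= g j) -> sumZ a b f <= sumZ a b g.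
Proof. intros H. apply sum_up_le. intros. apply H. lia. Qed.

Lemma sumZ_sqr_le a b g : (a <= b + 1)%Z ->
  (sumZ a b g) ^ 2 <= IZR (b - a + 1) * sumZ a b (fun j => g j ^ 2).
Proof. intros H. rewrite <- (Z2Nat.id (b - a + 1)), <- INR_IZR_INZ by lia. apply sum_up_sqr_le. Qed.

Lemma sumZ_widen_l a b g (d : nat) : (a <= b + 1)%Z ->
  (forall j, (a - Z.of_nat d <= j < a)%Z -> g j = 0) -> sumZ (a - Z.of_nat d) b g = sumZ a b g.
Proof.
  intros Hab. induction d as [|d IH]; intros Hz; [now rewrite Z.sub_0_r|].
  replace (a - Z.of_nat (S d))%Z with (a - Z.of_nat d - 1)%Z by lia.
  rewrite sumZ_S_l, IH, Hz by (intros; lia || (apply Hz; lia)). ring.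
Qed.

Lemma sumZ_widen_r a b g (d : nat) : (a <= b + 1)%Z ->
  (forall j, (b < j <= b + Z.of_nat d)%Z -> g j = 0) -> sumZ a (b + Z.of_nat d) g = sumZ a b g.
Proof.
  intros Hab. induction d as [|d IH]; intros Hz; [now rewrite Z.add_0_r|].
  replace (b + Z.of_nat (S d))%Z with (b + Z.of_nat d + 1)%Z by lia.
  rewrite sumZ_S_r, IH, Hz by (intros; lia || (apply Hz; lia)). ring.
Qed.

Lemma sumZ_widen a b a' b' g : (a' <= a)%Z -> (b <= b')%Z -> (a <= b + 1)%Z ->
  (forall j, (j < a \/ b < j)%Z -> g j = 0) -> sumZ a' b' g = sumZ a b g.
Proof.
  intros Ha Hb Hab Hz.
  replace a' with (a - Z.of_nat (Z.to_nat (a - a')))%Z by lia.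
  replace b' with (b + Z.of_nat (Z.to_nat (b' - b)))%Z by lia.
  rewrite sumZ_widen_r, sumZ_widen_l; try lia; try reflexivity; intros; apply Hz; lia.
Qed.

Lemma sumZ_reflect a b c g : sumZ a b (fun j => g (c - j)%Z) = sumZ (c - b) (c - a) g.
Proof.
  replace (c - b)%Z with (- b + c)%Z by lia. replace (c - a)%Z with (- a + c)%Z by lia.
  rewrite <- sumZ_shift, <- sumZ_opp. apply sumZ_ext. intros. f_equal. lia.
Qed.

Lemma sumZ_single_support a b m g : (a <= m <= b)%Z -> (forall j, j <> m -> g j = 0) ->
  sumZ a b g = g m.
Proof.
  intros Hm Hg. rewrite (sumZ_widen m m); try lia; [apply sumZ_single|].
  intros j Hj. apply Hg. lia.
Qed.

Definition meanZ (a b : Z) (g : Z -> R) : R := sumZ a b g / IZR (b - a + 1).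

Lemma meanZ_ext a b f g : (forall j, (a <= j <= b)%Z -> f j = g j) -> meanZ a b f = meanZ a b g.
Proof. intros H. unfold meanZ. now rewrite (sumZ_ext _ _ _ _ H). Qed.

Lemma meanZ_le a b g M : (a <= b)%Z -> (forall j, (a <= j <= b)%Z -> g j <= M) -> meanZ a b g <= M.
Proof.
  intros Hab Hg. assert (Hc : 0 < IZR (b - a + 1)) by (apply IZR_lt; lia).
  unfold meanZ. apply Rle_div_l; [exact Hc|].
  rewrite Rmult_comm, <- sumZ_const by lia. now apply sumZ_le.
Qed.

Lemma meanZ_ge a b g M : (a <= b)%Z -> (forall j, (a <= j <= b)%Z -> M <= g j) -> M <= meanZ a b g.
Proof.
  intros Hab Hg. assert (Hc : 0 < IZR (b - a + 1)) by (apply IZR_lt; lia).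
  unfold meanZ. apply Rle_div_r; [exact Hc|].
  rewrite Rmult_comm, <- sumZ_const by lia. now apply sumZ_le.
Qed.

Lemma meanZ_const a b c : (a <= b)%Z -> meanZ a b (fun _ => c) = c.
Proof.
  intros Hab. assert (Hc : 0 < IZR (b - a + 1)) by (apply IZR_lt; lia).
  unfold meanZ. rewrite sumZ_const by lia. field. lra.
Qed.

Lemma sumZ_meanZ a b c d (F : Z -> Z -> R) :
  sumZ c d (fun j => meanZ a b (F j)) = meanZ a b (fun l => sumZ c d (fun j => F j l)).
Proof.
  unfold meanZ, Rdiv.
  rewrite (sumZ_ext _ _ _ (fun j => / IZR (b - a + 1) * sumZ a b (F j))) by (intros; ring).
  rewrite sumZ_scal, sumZ_swap. ring.
Qed.

Lemma meanZ_reflect a b c g : meanZ a b (fun j => g (c - j)%Z) = meanZ (c - b) (c - a) g.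
Proof. unfold meanZ. rewrite sumZ_reflect. do 2 f_equal. lia. Qed.

Lemma Z_div2_even j : j = (2 * (j / 2) + if Z.even j then 0 else 1)%Z.
Proof.
  rewrite <- Z.div2_div, <- Z.negb_odd. pose proof (Z.div2_odd j).
  destruct (Z.odd j); simpl in *; lia.
Qed.

(* [refine_step n f j] averages [f] over the window [i - n + 1, i + refine_top n j]
   around [i = j / 2]: [2n - 1] values for even [j], [2n] for odd [j]. *)
Definition refine_top (n : nat) (j : Z) : Z := if Z.even j then (Z.of_nat n - 1)%Z else Z.of_nat n.

Lemma refine_step_meanZ n f j :
  refine_step n f j = meanZ (- Z.of_nat n + 1) (refine_top n j) (fun l => f (j / 2 + l)%Z).
Proof.
  unfold refine_step, meanZ, refine_top, Rdiv.
  rewrite INR_IZR_INZ. destruct (Z.even j); rewrite Rmult_comm; do 2 f_equal.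
  - rewrite <- mult_IZR, <- minus_IZR. f_equal. lia.
  - rewrite <- mult_IZR. f_equal. lia.
Qed.

Lemma refine_top_shift n j m : refine_top n (j + 2 * m) = refine_top n j.
Proof. unfold refine_top. rewrite Z.even_add, Z.even_mul. now destruct (Z.even j). Qed.

Lemma delta_0 : delta 0 = 1.
Proof. reflexivity. Qed.

Lemma delta_eq0 i : i <> 0%Z -> delta i = 0.
Proof. intros H. unfold delta. now rewrite (proj2 (Z.eqb_neq i 0) H). Qed.

Lemma sumZ_delta_le a b c : sumZ a b (fun l => delta (c + l)%Z) <= 1.
Proof.
  destruct (Z_le_dec a (- c)) as [Ha|Ha]; [destruct (Z_le_dec (- c) b) as [Hb|Hb]|].
  - rewrite (sumZ_single_support _ _ (- c)) by (lia || (intros; apply delta_eq0; lia)).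
    rewrite Z.add_opp_diag_r, delta_0. lra.
  - rewrite sumZ_eq0 by (intros; apply delta_eq0; lia). lra.
  - rewrite sumZ_eq0 by (intros; apply delta_eq0; lia). lra.
Qed.

Lemma pow2_ge1 k : (1 <= 2 ^ Z.of_nat k)%Z.
Proof. pose proof (Z.pow_pos_nonneg 2 (Z.of_nat k)). lia. Qed.

Section Scheme.

Variable n : nat.
Hypothesis n_pos : (1 <= n)%nat.

Lemma refine_top_bounds j : (Z.of_nat n - 1 <= refine_top n j <= Z.of_nat n)%Z.
Proof. unfold refine_top. destruct (Z.even j); lia. Qed.

Lemma refine_top_count j : 2 * INR n - 1 <= IZR (refine_top n j - (- Z.of_nat n + 1) + 1).
Proof.
  rewrite INR_IZR_INZ.
  replace (2 * IZR (Z.of_nat n) - 1) with (IZR (2 * Z.of_nat n - 1)) by (rewrite minus_IZR, mult_IZR; ring).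
  apply IZR_le. pose proof (refine_top_bounds j). lia.
Qed.

Lemma refine_step_ge f M j : (forall i, M <= f i) -> M <= refine_step n f j.
Proof.
  intros Hf. rewrite refine_step_meanZ. apply meanZ_ge; auto.
  pose proof (refine_top_bounds j). lia.
Qed.

Lemma refine_step_le f M j : (forall i, f i <= M) -> refine_step n f j <= M.
Proof.
  intros Hf. rewrite refine_step_meanZ. apply meanZ_le; auto.
  pose proof (refine_top_bounds j). lia.
Qed.

Lemma subdiv_ge0 k i : 0 <= subdiv n k i.
Proof.
  induction k as [|k IH] in i |- *; cbn [subdiv].
  - unfold delta. destruct (Z.eqb i 0); lra.
  - now apply refine_step_ge.
Qed.

Lemma subdiv_le_inv k i : (1 <= k)%nat -> subdiv n k i <= / (2 * INR n - 1).
Proof.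
  intros Hk. destruct k as [|k]; [lia|]. clear Hk.
  assert (Hn : 1 <= INR n) by (apply (le_INR 1); exact n_pos).
  induction k as [|k IH] in i |- *.
  - cbn [subdiv]. rewrite refine_step_meanZ. unfold meanZ.
    pose proof (refine_top_count i) as Hc.
    apply Rle_trans with (1 / IZR (refine_top n i - (- Z.of_nat n + 1) + 1)).
    + apply Rmult_le_compat_r; [left; apply Rinv_0_lt_compat; lra | apply sumZ_delta_le].
    + unfold Rdiv. rewrite Rmult_1_l. apply Rinv_le_contravar; lra.
  - change (subdiv n (S (S k)) i) with (refine_step n (subdiv n (S k)) i).
    now apply refine_step_le.
Qed.

Lemma subdiv_eq0 k i : (2 * Z.of_nat n * (2 ^ Z.of_nat k - 1) < Z.abs i)%Z -> subdiv n k i = 0.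
Proof.
  induction k as [|k IH] in i |- *; intros Hi.
  - apply delta_eq0. simpl in Hi. lia.
  - cbn [subdiv]. rewrite refine_step_meanZ. unfold meanZ.
    rewrite sumZ_eq0; [unfold Rdiv; ring|]. intros l Hl. apply IH.
    rewrite Nat2Z.inj_succ, Z.pow_succ_r in Hi by lia.
    pose proof (pow2_ge1 k) as HP.
    set (P := (2 ^ Z.of_nat k)%Z) in *.
    pose proof (Z_div2_even i) as Ei. unfold refine_top in Hl.
    destruct (Z.even i); nia.
Qed.

Lemma subdiv_opp k i : subdiv n k (- i) = subdiv n k i.
Proof.
  induction k as [|k IH] in i |- *; cbn [subdiv].
  - unfold delta. destruct (Z.eqb_spec (- i) 0), (Z.eqb_spec i 0); lia || reflexivity.
  - rewrite !refine_step_meanZ.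
    set (r := if Z.even i then 0%Z else 1%Z).
    assert (Etop : refine_top n (- i) = refine_top n i) by (unfold refine_top; now rewrite Z.even_opp).
    assert (Ediv : (- i / 2 = - (i / 2) - r)%Z).
    { pose proof (Z_div2_even i). pose proof (Z_div2_even (- i)).
      rewrite Z.even_opp in *. unfold r in *. destruct (Z.even i); lia. }
    rewrite Etop, Ediv.
    (* reflecting the averaging window [l |-> r - l] maps it onto itself *)
    rewrite (meanZ_ext _ _ _ (fun l => subdiv n k (i / 2 + (r - l))%Z))
      by (intros; rewrite <- IH; f_equal; lia).
    rewrite (meanZ_reflect _ _ r (fun m => subdiv n k (i / 2 + m)%Z)).
    unfold refine_top, r. destruct (Z.even i); f_equal; lia.
Qed.

Lemma subdiv_lattice_eq0 k i J j :
  (Z.abs i <= 2 ^ Z.of_nat k * (J - 2 * Z.of_nat n))%Z -> (J < Z.abs j)%Z ->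
  subdiv n k (i - 2 ^ Z.of_nat k * j) = 0.
Proof.
  intros Hi Hj. apply subdiv_eq0.
  pose proof (pow2_ge1 k) as HP.
  set (P := (2 ^ Z.of_nat k)%Z) in *.
  assert (Habs : Z.abs (P * j) = (P * Z.abs j)%Z) by (rewrite Z.abs_mul; lia).
  assert (P * (J + 1) <= P * Z.abs j)%Z by (apply Z.mul_le_mono_nonneg_l; lia).
  nia.
Qed.

(* The hypothesis keeps every nonzero term inside [[-J, J]] at all levels of the induction. *)
Lemma subdiv_partition k i J : (Z.abs i <= 2 ^ Z.of_nat k * (J - 2 * Z.of_nat n))%Z ->
  sumZ (- J) J (fun j => subdiv n k (i - 2 ^ Z.of_nat k * j)) = 1.
Proof.
  induction k as [|k IH] in i, J |- *; intros Hi.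
  - cbn [subdiv]. rewrite (sumZ_single_support _ _ i).
    + rewrite Z.mul_1_l, Z.sub_diag. apply delta_0.
    + rewrite Z.mul_1_l in Hi. lia.
    + intros j Hj. apply delta_eq0. lia.
  - rewrite <- (sumZ_widen (- J) J (- (J + Z.of_nat n + 1)) (J + Z.of_nat n + 1))
      by (try lia; intros; apply (subdiv_lattice_eq0 _ _ J); lia).
    rewrite Nat2Z.inj_succ, Z.pow_succ_r in * by lia.
    pose proof (pow2_ge1 k) as HP.
    set (P := (2 ^ Z.of_nat k)%Z) in *.
    rewrite (sumZ_ext _ _ _
      (fun j => meanZ (- Z.of_nat n + 1) (refine_top n i) (fun l => subdiv n k (i / 2 + l - P * j)))).
    + rewrite sumZ_meanZ.
      pose proof (refine_top_bounds i) as Htop.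
      assert (Hwindow : forall l, (- Z.of_nat n + 1 <= l <= refine_top n i)%Z ->
                (Z.abs (i / 2 + l) <= P * (J + Z.of_nat n + 1 - 2 * Z.of_nat n))%Z).
      { intros l Hl. assert (Z.of_nat n + 1 <= P * (Z.of_nat n + 1))%Z by nia.
        pose proof (Z_div2_even i). destruct (Z.even i); nia. }
      rewrite (meanZ_ext _ _ _ (fun _ => 1)) by (intros l Hl; apply IH, Hwindow, Hl).
      apply meanZ_const. lia.
    + intros j _. cbn [subdiv]. rewrite refine_step_meanZ.
      replace (i - 2 * P * j)%Z with (i + 2 * (- P * j))%Z by ring.
      rewrite refine_top_shift. apply meanZ_ext. intros l _. f_equal.
      rewrite Z.mul_comm, Z.div_add by lia. lia.
Qed.

End Scheme.

Lemma is_lim_seq_eq u (a b : R) : is_lim_seq u a -> is_lim_seq u b -> a = b.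
Proof.
  intros Ha Hb. apply is_lim_seq_unique in Ha, Hb. rewrite Ha in Hb. now injection Hb.
Qed.

Lemma is_lim_seq_sumZ a b (u : Z -> nat -> R) (l : Z -> R) :
  (forall j, (a <= j <= b)%Z -> is_lim_seq (u j) (l j)) ->
  is_lim_seq (fun k => sumZ a b (fun j => u j k)) (sumZ a b l).
Proof.
  intros H. unfold sumZ.
  assert (Hm : forall m, (m <= Z.to_nat (b - a + 1))%nat ->
    is_lim_seq (fun k => sum_up m (fun t => u (a + Z.of_nat t)%Z k)) (sum_up m (fun t => l (a + Z.of_nat t)%Z))).
  { induction m as [|m IH]; intros Hm; cbn [sum_up].
    - apply is_lim_seq_const.
    - apply is_lim_seq_plus'; [apply IH; lia | apply H; lia]. }
  now apply Hm.
Qed.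

Lemma continuous_ball (f : R -> R) y eps : continuous f y -> 0 < eps ->
  exists d, 0 < d /\ forall z, Rabs (z - y) < d -> Rabs (f z - f y) < eps.
Proof.
  intros Hc He. apply continuity_pt_filterlim in Hc. rewrite continuity_pt_locally in Hc.
  destruct (Hc (mkposreal eps He)) as [d Hd]. exists d. split; [apply cond_pos|].
  intros z Hz. exact (Hd z Hz).
Qed.

Lemma Int_part_abs_bounds z : Rabs z - 1 < Rabs (IZR (Int_part z)) <= Rabs z + 1.
Proof. destruct (base_Int_part z). unfold Rabs. split; repeat destruct Rcase_abs; lra. Qed.

Lemma Int_part_dyadic_close y k : Rabs (y - IZR (Int_part (y * 2 ^ k)) / 2 ^ k) <= / 2 ^ k.
Proof.
  destruct (base_Int_part (y * 2 ^ k)). assert (Hp : 0 < 2 ^ k) by (apply pow_lt; lra).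
  replace (y - IZR (Int_part (y * 2 ^ k)) / 2 ^ k) with ((y * 2 ^ k - IZR (Int_part (y * 2 ^ k))) / 2 ^ k)
    by (field; lra).
  unfold Rdiv. rewrite Rabs_mult, (Rabs_right (/ _)) by (left; apply Rinv_0_lt_compat; lra).
  rewrite <- (Rmult_1_l (/ 2 ^ k)) at 2.
  apply Rmult_le_compat_r; [left; apply Rinv_0_lt_compat; lra | unfold Rabs; destruct Rcase_abs; lra].
Qed.

Lemma Series_finite (a : nat -> R) N : (forall k, (N <= k)%nat -> a k = 0) -> Series a = sum_up N a.
Proof.
  intros Hz. apply is_series_unique.
  assert (Hpart : forall m, sum_n a m = sum_up (S m) a).
  { induction m as [|m IH]; [rewrite sum_O; simpl; ring | rewrite sum_Sn, IH; reflexivity]. }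
  assert (Hstat : forall m, (N <= m)%nat -> sum_up m a = sum_up N a).
  { intros m Hm. induction Hm as [|m Hm IH]; [reflexivity | cbn [sum_up]; rewrite IH, Hz by lia; ring]. }
  apply (filterlim_ext_loc (fun _ => sum_up N a)); [|apply filterlim_const].
  exists N. intros m Hm. rewrite Hpart, (Hstat (S m)) by lia. reflexivity.
Qed.

Lemma sum_up_pair_sumZ N (h : Z -> R) :
  sum_up N (fun k => h (Z.of_nat k) + h (- Z.of_nat k - 1)%Z) = sumZ (- Z.of_nat N) (Z.of_nat N - 1) h.
Proof.
  induction N as [|N IH]; [reflexivity|]. cbn [sum_up]. rewrite IH.
  replace (- Z.of_nat (S N))%Z with (- Z.of_nat N - 1)%Z by lia.
  replace (Z.of_nat (S N) - 1)%Z with (Z.of_nat N - 1 + 1)%Z by lia.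
  rewrite sumZ_S_r, sumZ_S_l by lia. replace (Z.of_nat N - 1 + 1)%Z with (Z.of_nat N) by lia. ring.
Qed.

Lemma Series_pair_sumZ (h : Z -> R) a b : (a <= b + 1)%Z ->
  (forall j, (j < a \/ b < j)%Z -> h j = 0) ->
  Series (fun k => h (Z.of_nat k) + h (- Z.of_nat k - 1)%Z) = sumZ a b h.
Proof.
  intros Hab Hz. set (N := Z.to_nat (Z.abs a + Z.abs b + 1)).
  rewrite (Series_finite _ N), sum_up_pair_sumZ.
  - apply sumZ_widen; (lia || auto).
  - intros k Hk. rewrite !Hz by lia. ring.
Qed.

Lemma psi_sumZ F x a b : (a <= b + 1)%Z -> (forall j, (j < a \/ b < j)%Z -> F (x - IZR j) = 0) ->
  psi F x = sumZ a b (fun j => F (x - IZR j) ^ 2).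
Proof.
  intros Hab Hz. unfold psi.
  rewrite <- (Series_pair_sumZ (fun j => F (x - IZR j) ^ 2)) by (auto; intros j Hj; rewrite Hz by auto; ring).
  apply Series_ext. intros k.
  rewrite minus_IZR, opp_IZR, <- INR_IZR_INZ. do 3 f_equal; ring.
Qed.

Lemma continuous_sumZ a b (f : Z -> R -> R) x : (forall j, continuous (f j) x) ->
  continuous (fun y => sumZ a b (fun j => f j y)) x.
Proof.
  intros Hf. unfold sumZ. induction (Z.to_nat (b - a + 1)) as [|m IH]; cbn [sum_up].
  - apply continuous_const.
  - apply (continuous_plus (fun y => sum_up m (fun t => f (a + Z.of_nat t)%Z y))); auto.
Qed.

Lemma continuous_sqr_shift (F : R -> R) c x : (forall y, continuous F y) ->
  continuous (fun y => F (y - c) ^ 2) x.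
Proof.
  intros HF.
  apply (continuous_comp (fun y => y - c) (fun z => F z ^ 2)).
  - apply (continuous_minus (fun y => y) (fun _ => c)); [apply continuous_id | apply continuous_const].
  - apply (continuous_ext (fun z => mult (F z) (F z))); [intros; unfold mult; simpl; ring|].
    apply (@continuous_mult R_UniformSpace R_AbsRing); auto.
Qed.

Lemma Int_part_near x : IZR (Int_part x) <= x <= IZR (Int_part x) + 1.
Proof. destruct (base_Int_part x). lra. Qed.

Section BasicLimit.

Variable n : nat.
Hypothesis n_pos : (1 <= n)%nat.
Variable phi : R -> R.
Hypothesis phi_basic : is_basic_limit n phi.

Lemma basic_limit_cvg y (i : nat -> Z) :
  (forall k, Rabs (y - IZR (i k) / 2 ^ k) <= / 2 ^ k) ->
  is_lim_seq (fun k => subdiv n k (i k)) (phi y).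
Proof.
  destruct phi_basic as [Hcont Hunif]. intros Hi. apply is_lim_seq_spec. intros eps.
  assert (Heps : 0 < eps / 2) by (apply Rdiv_lt_0_compat; [apply cond_pos | lra]).
  destruct (continuous_ball phi y (eps / 2) (Hcont y) Heps) as [d [Hd Hphi]].
  destruct (Hunif (eps / 2) Heps) as [K1 HK1].
  assert (Hmesh : eventually (fun k => / 2 ^ k < d)).
  { assert (Hgeom := is_lim_seq_geom (/ 2) ltac:(rewrite Rabs_right; lra)).
    destruct (proj2 (is_lim_seq_spec _ _) Hgeom (mkposreal d Hd)) as [K2 HK2].
    exists K2. intros k Hk. specialize (HK2 k Hk). simpl in HK2.
    rewrite Rminus_0_r, Rabs_right, pow_inv in HK2 by (apply Rle_ge, pow_le; lra). exact HK2. }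
  destruct Hmesh as [K2 HK2].
  exists (Nat.max K1 K2). intros k Hk.
  specialize (HK1 k ltac:(lia) (i k)). specialize (HK2 k ltac:(lia)). specialize (Hi k).
  assert (Hclose : Rabs (IZR (i k) / 2 ^ k - y) < d) by (rewrite Rabs_minus_sym; lra).
  specialize (Hphi _ Hclose).
  replace (subdiv n k (i k) - phi y)
    with ((subdiv n k (i k) - phi (IZR (i k) / 2 ^ k)) + (phi (IZR (i k) / 2 ^ k) - phi y)) by ring.
  eapply Rle_lt_trans; [apply Rabs_triang|]. lra.
Qed.

Lemma subdiv_dyadic_cvg y : is_lim_seq (fun k => subdiv n k (Int_part (y * 2 ^ k))) (phi y).
Proof. apply basic_limit_cvg, Int_part_dyadic_close. Qed.

Lemma phi_ge0 y : 0 <= phi y.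
Proof.
  change (Rbar_le 0 (phi y)).
  apply (is_lim_seq_le (fun _ => 0) (fun k => subdiv n k (Int_part (y * 2 ^ k)))).
  - intros k. now apply subdiv_ge0.
  - apply is_lim_seq_const.
  - apply subdiv_dyadic_cvg.
Qed.

Lemma phi_le_inv y : phi y <= / (2 * INR n - 1).
Proof.
  change (Rbar_le (phi y) (/ (2 * INR n - 1))).
  apply (is_lim_seq_le_loc (fun k => subdiv n k (Int_part (y * 2 ^ k))) (fun _ => / (2 * INR n - 1))).
  - exists 1%nat. intros k Hk. now apply subdiv_le_inv.
  - apply subdiv_dyadic_cvg.
  - apply is_lim_seq_const.
Qed.

Lemma phi_eq0 y : 2 * INR n <= Rabs y -> phi y = 0.
Proof.
  intros Hy. apply (is_lim_seq_eq (fun k => subdiv n k (Int_part (y * 2 ^ k)))).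
  - apply subdiv_dyadic_cvg.
  - apply (is_lim_seq_ext (fun _ => 0)); [|apply is_lim_seq_const].
    intros k. symmetry. apply subdiv_eq0; auto.
    pose proof (Int_part_abs_bounds (y * 2 ^ k)) as [Hlow _].
    assert (Hp : 1 <= 2 ^ k) by (apply pow_R1_Rle; lra).
    rewrite Rabs_mult, (Rabs_right (2 ^ k)) in Hlow by lra.
    assert (Hn : 1 <= INR n) by (apply (le_INR 1); exact n_pos).
    assert (2 * INR n * 2 ^ k <= Rabs y * 2 ^ k) by (apply Rmult_le_compat_r; lra).
    apply lt_IZR. rewrite abs_IZR, !mult_IZR, minus_IZR, <- pow_IZR, <- INR_IZR_INZ. lra.
Qed.

Lemma phi_opp y : phi (- y) = phi y.
Proof.
  apply (is_lim_seq_eq (fun k => subdiv n k (Int_part (y * 2 ^ k)))); [|apply subdiv_dyadic_cvg].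
  apply (is_lim_seq_ext (fun k => subdiv n k (- Int_part (y * 2 ^ k)))); [intros; now apply subdiv_opp|].
  apply basic_limit_cvg. intros k. rewrite opp_IZR.
  replace (- y - - IZR (Int_part (y * 2 ^ k)) / 2 ^ k) with (- (y - IZR (Int_part (y * 2 ^ k)) / 2 ^ k))
    by (field; apply pow_nonzero; lra).
  rewrite Rabs_Ropp. apply Int_part_dyadic_close.
Qed.

Lemma phi_partition x M : Rabs x + 2 * INR n + 1 <= IZR M ->
  sumZ (- M) M (fun j => phi (x - IZR j)) = 1.
Proof.
  intros HM.
  apply (is_lim_seq_eq (fun k => sumZ (- M) M (fun j => subdiv n k (Int_part (x * 2 ^ k) - 2 ^ Z.of_nat k * j)))).
  - apply is_lim_seq_sumZ. intros j _. apply basic_limit_cvg. intros k.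
    rewrite minus_IZR, mult_IZR, <- pow_IZR.
    replace (x - IZR j - (IZR (Int_part (x * 2 ^ k)) - 2 ^ k * IZR j) / 2 ^ k)
      with (x - IZR (Int_part (x * 2 ^ k)) / 2 ^ k) by (field; apply pow_nonzero; lra).
    apply Int_part_dyadic_close.
  - apply (is_lim_seq_ext (fun _ => 1)); [|apply is_lim_seq_const].
    intros k. symmetry. apply subdiv_partition; auto.
    pose proof (Int_part_abs_bounds (x * 2 ^ k)) as [_ Hup].
    assert (Hp : 1 <= 2 ^ k) by (apply pow_R1_Rle; lra).
    rewrite Rabs_mult, (Rabs_right (2 ^ k)) in Hup by lra.
    assert (Rabs x * 2 ^ k <= (IZR M - 2 * INR n - 1) * 2 ^ k) by (apply Rmult_le_compat_r; lra).
    apply le_IZR. rewrite abs_IZR, !mult_IZR, minus_IZR, mult_IZR, <- pow_IZR, <- INR_IZR_INZ. lra.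
Qed.

Lemma phi_shift_eq0 m x j : IZR m <= x <= IZR m + 1 ->
  (j < m - 2 * Z.of_nat n + 1 \/ m + 2 * Z.of_nat n < j)%Z -> phi (x - IZR j) = 0.
Proof.
  intros Hx Hj. apply phi_eq0. pose proof (pos_INR n). rewrite INR_IZR_INZ in *.
  destruct Hj as [Hj|Hj].
  - assert (Hle : (j <= m - 2 * Z.of_nat n)%Z) by lia.
    apply IZR_le in Hle. rewrite minus_IZR, mult_IZR in Hle.
    rewrite Rabs_right; lra.
  - assert (Hle : (m + 2 * Z.of_nat n + 1 <= j)%Z) by lia.
    apply IZR_le in Hle. rewrite !plus_IZR, mult_IZR in Hle.
    rewrite Rabs_left1; lra.
Qed.

Lemma phi_partition_near m x : IZR m <= x <= IZR m + 1 ->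
  sumZ (m - 2 * Z.of_nat n + 1) (m + 2 * Z.of_nat n) (fun j => phi (x - IZR j)) = 1.
Proof.
  intros Hx. set (M := (Z.abs m + 2 * Z.of_nat n + 2)%Z).
  rewrite <- (sumZ_widen _ _ (- M) M) by (unfold M; lia || (intros; now apply (phi_shift_eq0 m))).
  apply phi_partition. unfold M. rewrite !plus_IZR, mult_IZR, abs_IZR, <- INR_IZR_INZ.
  unfold Rabs; repeat destruct Rcase_abs; lra.
Qed.

Lemma psi_near m x : IZR m <= x <= IZR m + 1 ->
  psi phi x = sumZ (m - 2 * Z.of_nat n + 1) (m + 2 * Z.of_nat n) (fun j => phi (x - IZR j) ^ 2).
Proof. intros Hx. apply psi_sumZ; [lia|]. intros. now apply (phi_shift_eq0 m). Qed.

(* Cauchy-Schwarz on the [4n] translates that can be nonzero, which sum to 1. *)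
Lemma psi_ge x : / (4 * INR n) <= psi phi x.
Proof.
  assert (Hx := Int_part_near x). set (m := Int_part x) in *.
  rewrite (psi_near m) by exact Hx.
  pose proof (sumZ_sqr_le (m - 2 * Z.of_nat n + 1) (m + 2 * Z.of_nat n) (fun j => phi (x - IZR j)) ltac:(lia)) as HCS.
  rewrite (phi_partition_near m x Hx), pow1 in HCS.
  replace (IZR (m + 2 * Z.of_nat n - (m - 2 * Z.of_nat n + 1) + 1)) with (4 * INR n) in HCS
    by (rewrite INR_IZR_INZ, <- mult_IZR; f_equal; lia).
  assert (Hn : 1 <= INR n) by (apply (le_INR 1); exact n_pos).
  apply Rmult_le_reg_l with (4 * INR n); [lra|]. rewrite Rinv_r by lra. lra.
Qed.

Lemma psi_le x : psi phi x <= / (2 * INR n - 1).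
Proof.
  assert (Hx := Int_part_near x). set (m := Int_part x) in *.
  rewrite (psi_near m) by exact Hx.
  apply Rle_trans with (sumZ (m - 2 * Z.of_nat n + 1) (m + 2 * Z.of_nat n)
                          (fun j => / (2 * INR n - 1) * phi (x - IZR j))).
  - apply sumZ_le. intros j _.
    pose proof (phi_ge0 (x - IZR j)).
    pose proof (phi_le_inv (x - IZR j)). nra.
  - rewrite sumZ_scal, (phi_partition_near m x Hx). lra.
Qed.

Lemma psi_opp x : psi phi (- x) = psi phi x.
Proof.
  assert (Hx := Int_part_near x). set (m := Int_part x) in *.
  rewrite (psi_near m x), (psi_near (- m - 1) (- x)) by (exact Hx || (rewrite minus_IZR, opp_IZR; lra)).
  replace (- m - 1 - 2 * Z.of_nat n + 1)%Z with (- (m + 2 * Z.of_nat n))%Z by ring.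
  replace (- m - 1 + 2 * Z.of_nat n)%Z with (- (m - 2 * Z.of_nat n + 1))%Z by ring.
  rewrite <- sumZ_opp. apply sumZ_ext. intros j _.
  rewrite opp_IZR, <- (phi_opp (x - IZR j)). do 2 f_equal. ring.
Qed.

Lemma psi_periodic x : psi phi (x + 1) = psi phi x.
Proof.
  assert (Hx := Int_part_near x). set (m := Int_part x) in *.
  rewrite (psi_near m x), (psi_near (m + 1) (x + 1)) by (exact Hx || (rewrite plus_IZR; lra)).
  replace (m + 1 - 2 * Z.of_nat n + 1)%Z with (m - 2 * Z.of_nat n + 1 + 1)%Z by ring.
  replace (m + 1 + 2 * Z.of_nat n)%Z with (m + 2 * Z.of_nat n + 1)%Z by ring.
  rewrite <- sumZ_shift. apply sumZ_ext. intros j _.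
  rewrite plus_IZR. do 2 f_equal. ring.
Qed.

Lemma ex_RInt_psi : ex_RInt (psi phi) 0 1.
Proof.
  set (G := fun x => sumZ (0 - 2 * Z.of_nat n + 1) (0 + 2 * Z.of_nat n) (fun j => phi (x - IZR j) ^ 2)).
  apply (ex_RInt_ext G).
  - rewrite Rmin_left, Rmax_right by lra. intros x Hx. symmetry. apply psi_near. simpl. lra.
  - apply (ex_RInt_continuous (V := R_CompleteNormedModule)). intros z _.
    apply continuous_sumZ. intros j. apply continuous_sqr_shift, phi_basic.
Qed.

Lemma RInt_psi_bounds : / (4 * INR n) <= RInt (psi phi) 0 1 <= / (2 * INR n - 1).
Proof.
  assert (Hconst : forall c : R, RInt (V := R_CompleteNormedModule) (fun _ => c) 0 1 = c)
    by (intros; rewrite RInt_const; unfold scal; simpl; unfold mult; simpl; ring).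
  split.
  - rewrite <- (Hconst (/ (4 * INR n))) at 1.
    apply RInt_le; [lra | apply ex_RInt_const | apply ex_RInt_psi | intros; apply psi_ge].
  - rewrite <- (Hconst (/ (2 * INR n - 1))).
    apply RInt_le; [lra | apply ex_RInt_psi | apply ex_RInt_const | intros; apply psi_le].
Qed.

End BasicLimit.

Theorem theorem6 (phi : nat -> R -> R)
  (Hphi : forall n : nat, (1 <= n)%nat -> is_basic_limit n (phi n)) :
  (forall n : nat, (1 <= n)%nat -> forall x : R, 0 < psi (phi n) x) /\
  (forall n : nat, (1 <= n)%nat -> forall x : R, psi (phi n) (- x) = psi (phi n) x) /\
  (forall n : nat, (1 <= n)%nat -> forall x : R, psi (phi n) (x + 1) = psi (phi n) x) /\
  (exists c1 c2 : R, 0 < c1 /\ 0 < c2 /\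
     forall n : nat, (1 <= n)%nat ->
       c1 / INR n <= RInt (psi (phi n)) 0 1 <= c2 / INR n) /\
  (exists C : R, forall n : nat, (1 <= n)%nat ->
     forall x : R, Rabs (psi (phi n) x) <= C / INR n).
Proof.
  assert (Hn : forall n, (1 <= n)%nat -> 1 <= INR n) by (intros n H; apply (le_INR 1); exact H).
  assert (Hlow : forall n, (1 <= n)%nat -> / (4 * INR n) = (1 / 4) / INR n)
    by (intros n H; specialize (Hn n H); field; lra).
  assert (Hup : forall n, (1 <= n)%nat -> / (2 * INR n - 1) <= 1 / INR n)
    by (intros n H; specialize (Hn n H); unfold Rdiv; rewrite Rmult_1_l; apply Rinv_le_contravar; lra).
  assert (Hpos : forall n, (1 <= n)%nat -> 0 < / (4 * INR n))
    by (intros n H; specialize (Hn n H); apply Rinv_0_lt_compat; lra).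
  split; [|split; [|split; [|split]]].
  - intros n H x. exact (Rlt_le_trans _ _ _ (Hpos n H) (psi_ge n H (phi n) (Hphi n H) x)).
  - intros n H x. exact (psi_opp n H (phi n) (Hphi n H) x).
  - intros n H x. exact (psi_periodic n H (phi n) (Hphi n H) x).
  - exists (1 / 4), 1. do 2 (split; [lra|]). intros n H.
    destruct (RInt_psi_bounds n H (phi n) (Hphi n H)) as [Hl Hu].
    rewrite <- Hlow by exact H. split; [exact Hl | eapply Rle_trans; [exact Hu | apply Hup, H]].
  - exists 1. intros n H x.
    pose proof (psi_ge n H (phi n) (Hphi n H) x). pose proof (Hpos n H).
    rewrite Rabs_right by lra. exact (Rle_trans _ _ _ (psi_le n H (phi n) (Hphi n H) x) (Hup n H)).
Qed.
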